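(* Let $\Lambda$ be a lattice of rank $n$, $U=\Lambda\otimes\mathbb{R}$, and let $X\subset\Lambda$ be a basis of $U$. Then $$M_X(x,1)=\sum_{k=0}^n\Big(\sum_{A\subseteq X,\ |A|=n-k}h(A)\Big)x^k.$$
   Context: For a list $Y$, $\mathcal{Z}(Y)=\{\sum_{y\in Y}t_y y: 0\le t_y\le 1\}$; for $A\subseteq X$, $\mathcal{Z}(A)$ is a face of the parallelepiped $\mathcal{Z}(X)$. A point $p\in\Lambda\cap\mathcal{Z}(X)$ is internal to a face $F$ if $F$ is the smallest face of $\mathcal{Z}(X)$ containing $p$, and $h(A)$ is the number of points of $\Lambda$ internal to $\mathcal{Z}(A)$. For $A\subseteq X$: $r(A)=\dim_{\mathbb{R}}\langle A\rangle_{\mathbb{R}}$, $m(A)=[\Lambda\cap\langle A\rangle_{\mathbb{R}}:\langle A\rangle_{\mathbb{Z}}]$, and $M_X(x,y)=\sum_{A\subseteq X} m(A)(x-1)^{r(X)-r(A)}(y-1)^{|A|-r(A)}$. *)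

From HB Require Import structures.
From mathcomp Require Import all_boot all_order all_algebra.
From mathcomp Require Import reals.
From Stdlib Require Import ClassicalEpsilon.

Set Implicit Arguments.
Unset Strict Implicit.
Unset Printing Implicit Defensive.

Import Order.TTheory GRing.Theory Num.Theory.
Local Open Scope ring_scope.

Definition ncard {T : eqType} (S : T -> Prop) : nat :=
  epsilon (inhabits 0%N)
    (fun k => exists s : seq T, [/\ uniq s, size s = k & forall v, v \in s <-> S v]).

Section Defs.
(* Lattice Lambda = Z^n (integer row vectors), U = Lambda (x) R = R^n. *)
Variable R : realType.
Variable n : nat.
Variable X : 'I_n -> 'rV[int]_n.

Definition embed (v : 'rV[int]_n) : 'rV[R]_n := map_mx (fun z : int => z%:~R) v.

(* Sublists A of X are subsets of the index set. *)
Definition rk (A : {set 'I_n}) : nat :=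
  \rank (\matrix_(i < n) (if i \in A then embed (X i) else 0)).

Definition spanR (A : {set 'I_n}) (v : 'rV[int]_n) : Prop :=
  exists c : 'I_n -> R, embed v = \sum_(i in A) c i *: embed (X i).
Definition spanZ (A : {set 'I_n}) (v : 'rV[int]_n) : Prop :=
  exists c : 'I_n -> int, v = \sum_(i in A) c i *: X i.

(* k is the index [Lambda cap <A>_R : <A>_Z]: there are exactly k cosets *)
Definition is_index (A : {set 'I_n}) (k : nat) : Prop :=
  exists g : 'I_k -> 'rV[int]_n,
    [/\ forall i, spanR A (g i),
        forall i j, spanZ A (g i - g j) -> i = j
      & forall v, spanR A v -> exists i, spanZ A (v - g i)].

Definition mult (A : {set 'I_n}) : nat := epsilon (inhabits 0%N) (is_index A).

Definition MX (x y : R) : R :=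
  \sum_(A : {set 'I_n})
     (mult A)%:R * (x - 1) ^+ (rk setT - rk A)%N * (y - 1) ^+ (#|A| - rk A)%N.

Definition zono (A : {set 'I_n}) (p : 'rV[R]_n) : Prop :=
  exists t : 'I_n -> R, (forall i, 0 <= t i <= 1) /\
    p = \sum_(i in A) t i *: embed (X i).

Definition dotp (phi p : 'rV[R]_n) : R := (p *m phi^T) 0 0.

(* faces of the polytope Z(X) (exposed faces; phi = 0 gives Z(X) itself) *)
Definition face (F : 'rV[R]_n -> Prop) : Prop :=
  exists phi : 'rV[R]_n, forall p,
    F p <-> (zono setT p /\ forall q, zono setT q -> dotp phi q <= dotp phi p).

Definition internal (p : 'rV[R]_n) (F : 'rV[R]_n -> Prop) : Prop :=
  [/\ face F, F p & forall G, face G -> G p -> forall q, F q -> G q].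

Definition h (A : {set 'I_n}) : nat :=
  ncard (fun v : 'rV[int]_n => internal (embed v) (zono A)).

End Defs.

From HB Require Import structures.
From mathcomp Require Import all_boot all_order all_algebra.
From mathcomp Require Import reals.
From mathcomp Require Import zify lra.
From Stdlib Require Import ClassicalEpsilon.

Set Implicit Arguments.
Unset Strict Implicit.
Unset Printing Implicit Defensive.

Import Order.TTheory GRing.Theory Num.Theory.
Local Open Scope ring_scope.

(* In the coordinates given by the basis X, the zonotope Z(A) is the unit cube on the
   coordinates in A, and a lattice point is internal to the face Z(B) exactly when its
   coordinates lie in (0,1) on B and vanish off B.  The index m(A) counts the lattice points
   of the half-open cube [0,1)^A, each of which is internal to exactly one Z(B) with B ⊆ A,
   namely for B its support; hence m(A) = Σ_{B ⊆ A} h(B).  As X is independent, rk A = |A|,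
   so M_X(x,1) = Σ_A m(A) (x-1)^(n-|A|) = Σ_B h(B) Σ_{A ⊇ B} (x-1)^(n-|A|)
   = Σ_B h(B) x^(n-|B|). *)

Lemma sum_supersets_expr (R : comNzRingType) (T : finType) (B : {set T}) (y : R) :
  \sum_(A : {set T} | B \subset A) y ^+ #|~: A| = (1 + y) ^+ #|~: B|.
Proof.
have := bigA_distr 1 +%R (fun=> 1) (fun i : T => if i \in B then 0 else y).
have -> : \prod_i (1 + (if i \in B then 0 else y)) = (1 + y) ^+ #|~: B|.
  rewrite (eq_bigr (fun i => if i \in ~: B then 1 + y else 1)).
    by rewrite -big_mkcond prodr_const.
  by move=> i _; rewrite in_setC; case: (i \in B); rewrite ?addr0.
move=> ->; rewrite big_mkcond /=.
apply: eq_bigr => A _; case: (boolP (B \subset A)) => [BA | /subsetPn[i iB iA]].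
  rewrite (eq_bigr (fun i => if i \in ~: A then y else 1)); last first.
    move=> i _; rewrite in_setC; case: (boolP (i \in A)) => // iA.
    by rewrite (negbTE (contra (subsetP BA i) iA)).
  by rewrite -big_mkcond prodr_const.
by rewrite (bigD1 i) //= (negbTE iA) iB mul0r.
Qed.

Lemma ncard_eq (T : eqType) (S : T -> Prop) (s : seq T) :
  uniq s -> (forall v, v \in s <-> S v) -> ncard S = size s.
Proof.
move=> us hs; rewrite /ncard.
have := epsilon_spec (inhabits 0%N)
  (fun k => exists s : seq T, [/\ uniq s, size s = k & forall v, v \in s <-> S v])
  (ex_intro _ (size s) (ex_intro _ s (And3 us erefl hs))).
case=> s' [us' <- hs']; apply: perm_size; apply: uniq_perm => // v.
by apply/idP/idP => H; [apply/hs; apply/hs' | apply/hs'; apply/hs].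
Qed.

Section Index.
Variables (R : realType) (n : nat) (X : 'I_n -> 'rV[int]_n).

Lemma spanZB A u w : spanZ X A u -> spanZ X A w -> spanZ X A (u - w).
Proof.
case=> c -> [d ->]; exists (fun i => c i - d i).
by rewrite -sumrB; apply: eq_bigr => i _; rewrite scalerBl.
Qed.

Lemma is_index_le A k k' : is_index R X A k -> is_index R X A k' -> (k <= k')%N.
Proof.
case=> g [g_span g_inj _] [g' [_ _ g'_cover]].
have fP i : {j | spanZ X A (g i - g' j)}.
  exact: constructive_indefinite_description (g'_cover _ (g_span i)).
have f_inj : injective (fun i => sval (fP i)).
  move=> i1 i2 e; apply: g_inj.
  by have := spanZB (svalP (fP i1)) (svalP (fP i2)); rewrite /= e opprB addrA subrK.
by have := leq_card _ f_inj; rewrite !card_ord.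
Qed.

Lemma mult_eq A k : is_index R X A k -> mult R X A = k.
Proof.
move=> hk; have he := epsilon_spec (inhabits 0%N) (is_index R X A) (ex_intro _ k hk).
by apply/eqP; rewrite eqn_leq (is_index_le he hk) (is_index_le hk he).
Qed.

End Index.

Section Cubes.
Variables (R : numDomainType) (n : nat).
Implicit Types (A B : {set 'I_n}) (c : 'rV[R]_n).

Definition open_cube B c : bool :=
  [forall i, if i \in B then (0 < c 0 i) && (c 0 i < 1) else c 0 i == 0].

Definition semiopen_cube A c : bool :=
  [forall i, if i \in A then (0 <= c 0 i) && (c 0 i < 1) else c 0 i == 0].

Lemma open_cube_unit B c : open_cube B c -> forall i, 0 <= c 0 i <= 1.
Proof.
move/forallP => cB i; move: (cB i).
by case: (i \in B) => [/andP[/ltW -> /ltW ->] | /eqP ->] //; rewrite lexx ler01.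
Qed.

Lemma semiopen_cube_unit A c : semiopen_cube A c -> forall i, 0 <= c 0 i <= 1.
Proof.
move/forallP => cA i; move: (cA i).
by case: (i \in A) => [/andP[-> /ltW ->] | /eqP ->] //; rewrite lexx ler01.
Qed.

(* Each point of the half-open cube lies in exactly one open cube: the one on its support. *)
Lemma semiopen_cube_partition A c :
  (semiopen_cube A c : nat) = \sum_(B : {set 'I_n} | B \subset A) (open_cube B c : nat).
Proof.
set S := [set i | c 0 i != 0].
have cS (B : {set 'I_n}) : open_cube B c -> B = S.
  move/forallP => cB; apply/setP => i; rewrite inE; move: (cB i).
  by case: (i \in B) => [/andP[c0 _] | /eqP ->]; [rewrite (gt_eqF c0) | rewrite eqxx].
case: (boolP (semiopen_cube A c)) => [/forallP cA | cA].
  have SA : S \subset A.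
    apply/subsetP => i; rewrite inE; move: (cA i).
    by case: (i \in A) => // /eqP ->; rewrite eqxx.
  rewrite (bigD1 S) //= big1 ?addn0 => [|B /andP[_ BS]]; last first.
    by case: (boolP (open_cube B c)) => // /cS eB; rewrite eB eqxx in BS.
  suff -> : open_cube S c by [].
  apply/forallP => i; rewrite inE; move: (cA i).
  case: (i \in A) => [/andP[c0 c1] | /eqP ->]; last by rewrite eqxx.
  by case: (c 0 i =P 0) => [-> | /eqP nz] /=; rewrite ?eqxx // lt0r nz c0 c1.
rewrite big1 // => B BA; case: (boolP (open_cube B c)) => // /forallP cB.
case/negP: cA; apply/forallP => i; move: (cB i).
have := subsetP BA i; case: (i \in B) => [/(_ isT) -> /andP[c0 c1] | _ /eqP ->].
  by rewrite ltW.
by case: (i \in A); rewrite ?lexx ?ltr01 ?eqxx.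
Qed.

End Cubes.

Section Coordinates.
Variables (R : realType) (n : nat) (X : 'I_n -> 'rV[int]_n).
Local Notation M := (\matrix_(i < n) embed R (X i)).
Hypothesis M_unit : M \in unitmx.
Implicit Types (p q : 'rV[R]_n) (A B : {set 'I_n}).

Definition coord (p : 'rV[R]_n) : 'rV[R]_n := locked (p *m invmx M).

Lemma coordK t : coord (t *m M) = t.
Proof. by rewrite /coord -lock mulmxK. Qed.

Lemma coordKV p : coord p *m M = p.
Proof. by rewrite /coord -lock mulmxKV. Qed.

Lemma coord_inj : injective coord.
Proof. by move=> p q e; rewrite -(coordKV p) -(coordKV q) e. Qed.

Lemma coord0 : coord 0 = 0.
Proof. by rewrite /coord -lock mul0mx. Qed.

Lemma coordB p q : coord (p - q) = coord p - coord q.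
Proof. by rewrite /coord -!lock mulmxBl. Qed.

Lemma sum_scale_basis (A : {set 'I_n}) (t : 'I_n -> R) :
  \sum_(i in A) t i *: embed R (X i) = (\row_i (if i \in A then t i else 0)) *m M.
Proof.
rewrite mulmx_sum_row big_mkcond /=; apply: eq_bigr => i _.
by rewrite mxE rowK; case: ifP; rewrite ?scale0r.
Qed.

Lemma zono_coordP A p : zono X A p <->
  forall i, if i \in A then 0 <= coord p 0 i <= 1 else coord p 0 i == 0.
Proof.
split=> [[t [t01 ->]] i | cA].
  by rewrite sum_scale_basis coordK mxE; case: (i \in A); rewrite ?eqxx.
exists (fun i => if i \in A then coord p 0 i else 0); split.
  by move=> i; move: (cA i); case: ifP => // _ _; rewrite lexx ler01.
rewrite sum_scale_basis -{1}(coordKV p); congr (_ *m _); apply/rowP => i.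
by rewrite [RHS]mxE; move: (cA i); case: (i \in A) => // /eqP.
Qed.

Lemma zonoT_coordP p : zono X setT p <-> forall i, 0 <= coord p 0 i <= 1.
Proof. by rewrite zono_coordP; split=> cT i; move: (cT i); rewrite in_setT. Qed.

Lemma zono_setT A p : zono X A p -> zono X setT p.
Proof.
move/zono_coordP => cA; apply/zonoT_coordP => i; move: (cA i).
by case: (i \in A) => // /eqP ->; rewrite lexx ler01.
Qed.

Lemma zono0 A : zono X A (0 : 'rV[R]_n).
Proof.
by apply/zono_coordP => i; rewrite coord0 mxE; case: (i \in A); rewrite ?lexx ?ler01.
Qed.

Lemma zono_basis A i : i \in A -> zono X A (delta_mx 0 i *m M).
Proof.
move=> iA; apply/zono_coordP => j; rewrite coordK mxE /=.
case: (boolP (j \in A)) => jA; first by case: (j == i); rewrite ?ler01 ?lexx.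
by case: (j =P i) => // ji; rewrite ji iA in jA.
Qed.

Lemma zono_open_cube B p : open_cube B (coord p) -> zono X B p.
Proof.
move=> cB; apply/zono_coordP => i; have := open_cube_unit cB i.
by move/forallP: cB => /(_ i); case: (i \in B).
Qed.

Definition cpair (a : 'cV[R]_n) (c : 'rV[R]_n) : R := (c *m a) 0 0.

Lemma cpairE a c : cpair a c = \sum_j c 0 j * a j 0.
Proof. by rewrite /cpair mxE. Qed.

Lemma cpair0 a : cpair a 0 = 0.
Proof. by rewrite /cpair mul0mx mxE. Qed.

Lemma cpairD a c d : cpair a (c + d) = cpair a c + cpair a d.
Proof. by rewrite /cpair mulmxDl mxE. Qed.

Lemma cpairZ a k c : cpair a (k *: c) = k * cpair a c.
Proof. by rewrite /cpair -scalemxAl mxE. Qed.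

Lemma cpairNl a c : cpair (- a) c = - cpair a c.
Proof. by rewrite /cpair mulmxN mxE. Qed.

Lemma cpair_row_delta a i : cpair a (delta_mx 0 i) = a i 0.
Proof. by rewrite /cpair -rowE mxE. Qed.

Lemma cpair_col_delta c i : cpair (delta_mx i 0) c = c 0 i.
Proof. by rewrite /cpair -colE mxE. Qed.

Definition cface (a : 'cV[R]_n) (p : 'rV[R]_n) : Prop :=
  zono X setT p /\ forall q, zono X setT q -> cpair a (coord q) <= cpair a (coord p).

Lemma dotp_cpair phi p : dotp phi p = cpair (M *m phi^T) (coord p).
Proof. by rewrite /dotp /cpair -{1}(coordKV p) mulmxA. Qed.

Lemma faceP G : face X G <-> exists a, forall p, G p <-> cface a p.
Proof.
split=> [[phi Gphi] | [a Ga]].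
  exists (M *m phi^T) => p; rewrite Gphi /cface.
  by split; case=> pT pmax; split=> // q; rewrite -?dotp_cpair => /pmax; rewrite ?dotp_cpair.
exists (invmx M *m a)^T => p; rewrite Ga /cface.
have Ma : M *m (invmx M *m a)^T^T = a by rewrite trmxK mulKVmx.
by split; case=> pT pmax; split=> // q; rewrite ?dotp_cpair ?Ma => /pmax; rewrite ?dotp_cpair ?Ma.
Qed.

Lemma face_cface a : face X (cface a).
Proof. by apply/faceP; exists a. Qed.

(* Moving p along the i-th basis vector in both directions stays in Z(X). *)
Lemma cface_weight_eq0 a p i : cface a p -> 0 < coord p 0 i < 1 -> a i 0 = 0.
Proof.
case=> /zonoT_coordP pT pmax /andP[c0 c1].
have shift k : 0 <= coord p 0 i + k <= 1 -> k * a i 0 <= 0.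
  move=> hk; have qT : zono X setT ((coord p + k *: delta_mx 0 i) *m M).
    apply/zonoT_coordP => j; rewrite coordK !mxE eqxx /=.
    by case: (j =P i) => [-> | _]; rewrite ?mulr1 ?mulr0 ?addr0.
  by have := pmax _ qT; rewrite coordK cpairD cpairZ cpair_row_delta gerDl.
apply/eqP; rewrite eq_le; apply/andP; split.
  have := shift (1 - coord p 0 i); rewrite addrC subrK ler01 lexx.
  by rewrite pmulr_rle0 ?subr_gt0 //; apply.
have := shift (- coord p 0 i); rewrite subrr lexx ler01 mulNr oppr_le0.
by rewrite pmulr_rge0 //; apply.
Qed.

Lemma cface_open_cube a B p q :
  cface a p -> open_cube B (coord p) -> zono X B q -> cface a q.
Proof.
move=> [pT pmax] cB Bq.
have a0 j : j \in B -> a j 0 = 0.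
  move=> jB; apply: (cface_weight_eq0 (conj pT pmax)).
  by move/forallP: cB => /(_ j); rewrite jB.
have vanish r : zono X B r -> cpair a (coord r) = 0.
  move=> /zono_coordP Br; rewrite cpairE big1 // => j _; move: (Br j).
  by case: (boolP (j \in B)) => jB; [rewrite a0 // mulr0 | move=> /eqP ->; rewrite mul0r].
split; first exact: zono_setT Bq.
by move=> r rT; rewrite (vanish _ Bq) -(vanish _ (zono_open_cube cB)); apply: pmax.
Qed.

(* Z(B) maximizes minus the sum of the coordinates outside B. *)
Lemma face_zono B : face X (zono (R:=R) X B).
Proof.
apply/faceP; exists (\col_i (if i \in B then 0 else -1)) => q.
have cpE r : cpair (\col_i (if i \in B then 0 else -1)) (coord r) =
             - \sum_(j | j \notin B) coord r 0 j.
  rewrite cpairE -sumrN [RHS]big_mkcond; apply: eq_bigr => j _.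
  by rewrite mxE; case: (j \in B); rewrite ?mulr0 ?oppr0 ?mulrN1.
have outside_ge0 r : zono X setT r -> forall j, j \notin B -> 0 <= coord r 0 j.
  by move=> /zonoT_coordP rT j _; case/andP: (rT j).
split=> [Bq | [qT qmax]].
  split=> [|r rT]; first exact: zono_setT Bq.
  rewrite !cpE lerN2 big1 ?sumr_ge0 // => j jB; first exact: outside_ge0.
  by move/zono_coordP: Bq => /(_ j); rewrite (negbTE jB) => /eqP.
apply/zono_coordP => j; case: ifP => jB; first by move/zonoT_coordP: qT.
have := qmax 0 (zono0 _); rewrite coord0 cpair0 !cpE lerNr oppr0 => sum_le0.
have sum0 : \sum_(j | j \notin B) coord q 0 j = 0.
  by apply/eqP; rewrite eq_le sum_le0 sumr_ge0 // => k; apply: outside_ge0.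
by rewrite (psumr_eq0P (outside_ge0 _ qT) sum0) ?jB.
Qed.

Lemma internal_open_cube B p : open_cube B (coord p) -> internal X p (zono X B).
Proof.
move=> cB; split; [exact: face_zono | exact: zono_open_cube |].
move=> G /faceP[a Ga] Gp q Bq; apply/Ga.
by apply: cface_open_cube cB Bq; apply/Ga.
Qed.

(* Otherwise the face on which c_i is minimal contains p, hence Z(B), but misses X_i. *)
Lemma internal_coord_gt0 B p i : internal X p (zono X B) -> i \in B -> coord p 0 i != 0.
Proof.
case=> _ Bp Bmin iB; apply/eqP => ci.
have ap : cface (- delta_mx i 0) p.
  split=> [|q /zonoT_coordP qT]; first exact: zono_setT Bp.
  by rewrite !cpairNl !cpair_col_delta ci oppr0 oppr_le0; case/andP: (qT i).
have [_ /(_ 0 (zono0 _))] := Bmin _ (face_cface _) ap _ (zono_basis iB).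
by rewrite coord0 coordK cpair0 cpairNl cpair_col_delta mxE !eqxx oppr_ge0 ler10.
Qed.

(* Otherwise the face on which c_i is maximal contains p, hence Z(B), but misses 0. *)
Lemma internal_coord_lt1 B p i : internal X p (zono X B) -> i \in B -> coord p 0 i != 1.
Proof.
case=> _ Bp Bmin iB; apply/eqP => ci; have pT := zono_setT Bp.
have ap : cface (delta_mx i 0) p.
  by split=> // q /zonoT_coordP qT; rewrite !cpair_col_delta ci; case/andP: (qT i).
have [_ /(_ p pT)] := Bmin _ (face_cface _) ap 0 (zono0 _).
by rewrite coord0 cpair0 cpair_col_delta ci ler10.
Qed.

Lemma internalP B p : internal X p (zono X B) <-> open_cube B (coord p).
Proof.
split=> [pB | ]; last exact: internal_open_cube.
have [_ /zono_coordP Bp _] := pB.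
apply/forallP => i; have := Bp i; case: ifP => iB //; case/andP => c0 c1.
by rewrite !lt_def c0 c1 (internal_coord_gt0 pB iB) eq_sym (internal_coord_lt1 pB iB).
Qed.

Local Notation masked A := (\matrix_(i < n) (if i \in A then embed R (X i) else 0)).

Lemma rank_masked_le A : (\rank (masked A) <= #|A|)%N.
Proof.
have -> : masked A = \sum_(i in A) delta_mx i 0 *m embed R (X i).
  apply/matrixP => r c; rewrite mxE summxE.
  under eq_bigr do rewrite mxE big_ord1 !mxE.
  rewrite big_mkcond (bigD1 r) //= big1 ?addr0 => [|i ir].
    by case: (r \in A); rewrite ?mxE // eqxx mul1r.
  by rewrite eq_sym (negbTE ir) mul0r if_same.
rewrite -sum1_card; elim/big_rec2: _ => [|i k B _ hk]; first by rewrite mxrank0.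
apply: leq_trans (mxrank_add _ _) _; apply: leq_add => //.
by apply: leq_trans (mxrankM_maxl _ _) _; rewrite mxrank_delta.
Qed.

(* masked A and masked (~: A) add up to the invertible matrix M. *)
Lemma rk_card A : rk R X A = #|A|.
Proof.
have split_M : masked A + masked (~: A) = M.
  by apply/matrixP => r c; rewrite !mxE in_setC; case: (r \in A); rewrite !mxE ?addr0 ?add0r.
have := mxrank_add (masked A) (masked (~: A)); rewrite split_M mxrank_unit //.
have := rank_masked_le A; have := rank_masked_le (~: A).
have := cardsC A; rewrite card_ord /rk; lia.
Qed.

Lemma embedB (u v : 'rV[int]_n) : embed R (u - v) = embed R u - embed R v.
Proof. by apply/rowP => j; rewrite !mxE rmorphB. Qed.

Lemma embed_inj : injective (@embed R n).
Proof. by move=> u v /rowP e; apply/rowP => j; move: (e j); rewrite !mxE => /intr_inj. Qed.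

Lemma embed_sum A (z : 'I_n -> int) :
  embed R (\sum_(i in A) z i *: X i) = \sum_(i in A) (z i)%:~R *: embed R (X i).
Proof.
apply/rowP => j; rewrite !mxE !summxE rmorph_sum; apply: eq_bigr => i _.
by rewrite !mxE rmorphM.
Qed.

Definition lcoord (v : 'rV[int]_n) : 'rV[R]_n := coord (embed R v).

Lemma lcoordB u v : lcoord (u - v) = lcoord u - lcoord v.
Proof. by rewrite /lcoord embedB coordB. Qed.

Lemma lcoord_inj : injective lcoord.
Proof. by move=> u v /coord_inj/embed_inj. Qed.

Lemma lcoord_spanZ A (z : 'I_n -> int) :
  lcoord (\sum_(i in A) z i *: X i) = \row_i (if i \in A then (z i)%:~R else 0).
Proof. by rewrite /lcoord embed_sum sum_scale_basis coordK. Qed.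

Lemma spanR_lcoordP A v : spanR R X A v <-> forall i, i \notin A -> lcoord v 0 i = 0.
Proof.
split=> [[t e] i iA | vA]; first by rewrite /lcoord e sum_scale_basis coordK mxE (negbTE iA).
exists (fun i => lcoord v 0 i); rewrite sum_scale_basis -{1}(coordKV (embed R v)).
congr (_ *m _); apply/rowP => i; rewrite [RHS]mxE.
by case: (boolP (i \in A)) => // /vA.
Qed.

Definition bound : nat := \sum_(i < n) \sum_(j < n) `|X i ord0 j|%N.

(* A finite list containing every lattice point of Z(X). *)
Definition box : seq 'rV[int]_n :=
  [seq \row_j ((f j : nat)%:Z - bound%:Z) | f : {ffun 'I_n -> 'I_(bound + bound).+1}].

Lemma box_uniq : uniq box.
Proof.
rewrite map_inj_uniq ?enum_uniq // => f g /rowP e; apply/ffunP => j.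
by have := e j; rewrite !mxE => fg; apply: val_inj => /=; lia.
Qed.

Lemma mem_box (v : 'rV[int]_n) : (forall j, `|v ord0 j| <= bound)%N -> v \in box.
Proof.
move=> vb; apply/mapP; exists [ffun j => inord (absz (v ord0 j + bound%:Z))].
  by rewrite mem_enum.
apply/rowP => j; rewrite !mxE ffunE inordK; have := vb j; move: (v ord0 j) => z; lia.
Qed.

Lemma mem_box_zono v : (forall i, 0 <= lcoord v 0 i <= 1) -> v \in box.
Proof.
move=> v01; apply: mem_box => j.
have vj : (v 0 j)%:~R = \sum_i lcoord v 0 i * (X i 0 j)%:~R :> R.
  have /rowP/(_ j) := coordKV (embed R v); rewrite [RHS]mxE => <-.
  by rewrite mxE; apply: eq_bigr => i _; rewrite !mxE.
rewrite -(ler_nat R) natr_absz intr_norm vj.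
apply: le_trans (ler_norm_sum _ _ _) _; rewrite /bound natr_sum; apply: ler_sum => i _.
rewrite natr_sum (bigD1 j) //= normrM.
apply: le_trans (_ : _ <= `|X i ord0 j|%N%:R) _; last by rewrite lerDl sumr_ge0.
rewrite natr_absz intr_norm; have /andP[c0 c1] := v01 i.
by rewrite ger0_norm // ler_piMl.
Qed.

Definition semiopen_points A := [seq v <- box | semiopen_cube A (lcoord v)].
Definition open_points B := [seq v <- box | open_cube B (lcoord v)].

Lemma semiopen_cube_spanZ_inj A u v : semiopen_cube A (lcoord u) ->
  semiopen_cube A (lcoord v) -> spanZ X A (u - v) -> u = v.
Proof.
move=> /forallP uA /forallP vA [z uvz]; apply: lcoord_inj; apply/rowP => l.
have /rowP/(_ l) := congr1 lcoord uvz; rewrite lcoordB lcoord_spanZ !mxE.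
move: (uA l) (vA l); case: (l \in A) => [/andP[u0 u1] /andP[v0 v1] | /eqP -> /eqP ->] //.
move=> uvl; suff zl : z l = 0 by move/eqP: uvl; rewrite zl subr_eq add0r => /eqP.
have : (z l)%:~R < 1 :> R by rewrite -uvl; lra.
have : (-1 : int)%:~R < (z l)%:~R :> R by rewrite rmorphN1 -uvl; lra.
rewrite ltrz1 ltr_int; lia.
Qed.

(* Subtracting the integer parts of the coordinates lands in the half-open cube. *)
Lemma semiopen_cube_reduce A v : spanR R X A v ->
  exists z : 'I_n -> int, semiopen_cube A (lcoord (v - \sum_(l in A) z l *: X l)).
Proof.
move/spanR_lcoordP => vA; exists (fun l => Num.floor (lcoord v 0 l)).
apply/forallP => l; rewrite lcoordB lcoord_spanZ !mxE.
case: (boolP (l \in A)) => lA; last by rewrite vA // subr0.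
have := floorD1_gt (lcoord v 0 l); have := floor_le (lcoord v 0 l).
rewrite intrD => ha hb; apply/andP; split; lra.
Qed.

Lemma is_index_semiopen_points A : is_index R X A (size (semiopen_points A)).
Proof.
set s := semiopen_points A; have us : uniq s := filter_uniq _ box_uniq.
have s_cube (i : 'I_(size s)) : semiopen_cube A (lcoord (nth 0 s i)).
  by have := mem_nth 0 (ltn_ord i); rewrite mem_filter => /andP[].
exists (fun i : 'I_(size s) => nth 0 s i); split.
- move=> i; apply/spanR_lcoordP => l lA; move/forallP: (s_cube i) => /(_ l).
  by rewrite (negbTE lA) => /eqP.
- move=> i j /(semiopen_cube_spanZ_inj (s_cube i) (s_cube j)) /eqP.
  by rewrite nth_uniq // => /eqP /val_inj.
- move=> v /semiopen_cube_reduce[z vz]; set w := v - _ in vz.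
  have ws : w \in s.
    by rewrite mem_filter vz mem_box_zono // => i; apply: semiopen_cube_unit vz i.
  have ws_lt : (index w s < size s)%N by rewrite index_mem.
  exists (Ordinal ws_lt) => /=; rewrite nth_index //; exists z.
  by rewrite /w opprB addrC subrK.
Qed.

Lemma mult_semiopen_points A : mult R X A = size (semiopen_points A).
Proof. exact/mult_eq/is_index_semiopen_points. Qed.

Lemma h_open_points B : h R X B = size (open_points B).
Proof.
apply: ncard_eq; first exact: filter_uniq box_uniq.
move=> v; rewrite mem_filter internalP; split=> [/andP[] // | vB].
by rewrite vB mem_box_zono //; apply: open_cube_unit vB.
Qed.

Lemma mult_sum_h A : mult R X A = \sum_(B : {set 'I_n} | B \subset A) h R X B.
Proof.
rewrite mult_semiopen_points size_filter -sum1_count big_mkcond /=.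
under [RHS]eq_bigr do rewrite h_open_points size_filter -sum1_count big_mkcond /=.
by rewrite exchange_big /=; apply: eq_bigr => v _; apply: semiopen_cube_partition.
Qed.

End Coordinates.

Theorem lemma4p4 (R : realType) (n : nat) (X : 'I_n -> 'rV[int]_n)
  (hbasis : row_free (\matrix_(i < n) embed R (X i)) /\
            row_full (\matrix_(i < n) embed R (X i)))
  (x : R) :
  @MX R n X x 1 =
  \sum_(k < n.+1) (\sum_(A : {set 'I_n} | #|A| == (n - k)%N) @h R n X A)%:R * x ^+ k.
Proof.
have M_unit : (\matrix_(i < n) embed R (X i)) \in unitmx.
  by rewrite -row_free_unit; case: hbasis.
have cardC (A : {set 'I_n}) : (n - #|A|)%N = #|~: A|.
  by rewrite -[n in (n - _)%N](card_ord n) -(cardsC A) addKn.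
rewrite /MX.
under eq_bigr => A _ do rewrite !(rk_card M_unit) cardsT card_ord subnn subrr expr0 mulr1
  cardC (mult_sum_h M_unit) natr_sum mulr_suml.
rewrite (exchange_big_dep xpredT) //=.
under eq_bigr => B _ do rewrite -mulr_sumr sum_supersets_expr addrC subrK.
under [RHS]eq_bigr => k _ do rewrite natr_sum mulr_suml.
rewrite [RHS](exchange_big_dep xpredT) //=; apply: eq_bigr => B _.
have cB : (#|~: B| < n.+1)%N by rewrite ltnS -cardC leq_subr.
rewrite (big_pred1 (Ordinal cB)) // => k /=.
case: k => k kn; rewrite -(inj_eq val_inj) /= -cardC.
have := max_card B; rewrite card_ord => Bn.
by apply/eqP/eqP => e; rewrite e subKn // -ltnS.
Qed.
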